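(* Fix $i,j\in I$ with $\tau(i)=i\neq j$. For any $m,n\in\mathbb{N}$ there exists a uniquely determined polynomial $w_{m,n}(x,y)=\sum_{r,s}b_{rs}x^ry^s\in\mathbb{K}[x,y]$ such that, in $\mathcal{A}$, $$F_i^mF_jF_i^n=\sum_{r,s}b_{rs}\,F_i^{\circledast r}\circledast F_j\circledast F_i^{\circledast s},$$ where the left side is the product in the free algebra $T(V^-)$ and $F_i^{\circledast r}$ is the $r$-th power with respect to $\circledast$.
   Context: Let $I$ be a finite set and $(a_{kl})_{k,l\in I}$ a symmetrizable generalized Cartan matrix, with relatively prime positive integers $d_k$ such that $(d_ka_{kl})$ is symmetric. Let $Q=\bigoplus_{k\in I}\mathbb{Z}\alpha_k$ with symmetric bilinear form $(\alpha_k,\alpha_l)=d_ka_{kl}$ and $Q^+=\bigoplus_k\mathbb{N}\alpha_k$. Let $\mathbb{K}$ be a field of characteristic zero, $q\in\mathbb{K}^\times$ with $q^{2d_k}\neq1$ for all $k$, and $q_k=q^{d_k}$. Let $\tau:I\to I$ be a bijection with $\tau^2=\mathrm{id}$ and $a_{\tau(k)\tau(l)}=a_{kl}$, and let $(c_k)_{k\in I}\in(\mathbb{K}^\times)^I$ with $c_k=c_{\tau(k)}$ whenever $a_{k\tau(k)}=0$. Let $T(V^-)=\mathbb{K}\langle F_k:k\in I\rangle$ be the free algebra, graded by $-Q^+$ with $F_k$ of degree $-\alpha_k$. Let $\partial_k^L,\partial_k^R:T(V^-)\to T(V^-)$ be the linear maps with $\partial_k^L(F_l)=\partial_k^R(F_l)=\delta_{kl}$,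 $\partial_k^L(1)=\partial_k^R(1)=0$, and, for $f$ of degree $-\mu$ and $g$ of degree $-\nu$, $\partial_k^R(fg)=q^{(\alpha_k,\nu)}\partial_k^R(f)g+f\partial_k^R(g)$, $\partial_k^L(fg)=\partial_k^L(f)g+q^{(\alpha_k,\mu)}f\partial_k^L(g)$. Let $G_\theta\subseteq Q$ be the subgroup generated by $\alpha_k-\alpha_{\tau(k)}$, $k\in I$, and let $\mathcal{A}=H_\theta\ltimes T(V^-)$ be the $\mathbb{K}$-algebra generated by $T(V^-)$ and elements $K_\mu$ ($\mu\in G_\theta$) subject to $K_0=1$, $K_\mu K_\nu=K_{\mu+\nu}$, $K_\mu F_k=q^{-(\mu,\alpha_k)}F_kK_\mu$; write $K_{\tau(k)}K_k^{-1}=K_{\alpha_{\tau(k)}-\alpha_k}$ and let $H_\theta=\mathrm{span}\{K_\mu\}$. By earlier work there is a unique associative product $\circledast$ on $\mathcal{A}$ with $h\circledast g=hg$, $g\circledast h=gh$ for $h\in H_\theta$, $g\in T(V^-)$, and $F_k\circledast g=F_kg-\frac{c_kq^{(\alpha_k,\alpha_{\tau(k)})}}{q_k-q_k^{-1}}K_{\tau(k)}K_k^{-1}\partial^L_{\tau(k)}(g)$ for all $k\in I$, $g\in T(V^-)$. *)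

From HB Require Import structures.
From mathcomp Require Import all_boot all_order all_algebra.
From mathcomp Require Import finmap.
From mathcomp Require Import monalg.

Set Implicit Arguments.
Unset Strict Implicit.
Unset Printing Implicit Defensive.

Import Order.TTheory GRing.Theory Num.Theory.
Local Open Scope ring_scope.

Section QuantumSymmetricPair.

Variables (I : finType) (K : fieldType).

(* root lattice Q = Z^I, alpha_k the simple roots *)
Definition rootQ := {ffun I -> int}.
Definition alpha (k : I) : rootQ := [ffun l => (l == k)%:Z].

(* weight of a word F_{k1} ... F_{kn} is -(alpha_k1 + ... + alpha_kn);
   we record alpha_k1 + ... + alpha_kn *)
Definition wt (w : seq I) : rootQ := \sum_(k <- w) alpha k.

(* The underlying vector space of H_Q ⋉ T(V^-): basis K_mu F_w indexed by
   (mu, w) in Q x (words in I).  T(V^-) = span of K_0 F_w,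
   H_theta = span of K_mu, mu in G_theta. *)
Definition algA := {malg K[(rootQ * seq I)%type]}.

Definition basisA (mu : rootQ) (w : seq I) : algA := << (mu, w) >>.

Definition oneA : algA := basisA 0 [::].
Definition Fgen (k : I) : algA := basisA 0 [:: k].
Definition Kel (mu : rootQ) : algA := basisA mu [::].

Variables (a : I -> I -> int) (d : I -> nat) (q : K).

Definition form (mu nu : rootQ) : int :=
  \sum_(k : I) \sum_(l : I) mu k * nu l * ((d k)%:Z * a k l).

(* the algebra product of A: K_mu u * K_nu v = q^{(nu, wt u)} K_{mu+nu} u v,
   coming from K_nu F_k = q^{-(nu, alpha_k)} F_k K_nu *)
Definition mulAlg (x y : algA) : algA :=
  \sum_(u <- msupp x) \sum_(v <- msupp y)
     (x@_u * y@_v * q ^ form v.1 (wt u.2)) *: basisA (u.1 + v.1) (u.2 ++ v.2).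

Definition powAlg (x : algA) (n : nat) : algA := iter n (mulAlg x) oneA.

Definition inT (g : algA) : Prop := forall x, x \in msupp g -> x.1 = 0.

Definition inGtheta (tau : I -> I) (mu : rootQ) : Prop :=
  exists z : I -> int, mu = \sum_(k : I) (alpha k - alpha (tau k)) *~ z k.

Definition inH (tau : I -> I) (h : algA) : Prop :=
  forall x, x \in msupp h -> x.2 = [::] /\ inGtheta tau x.1.

Fixpoint dLword (k : I) (w : seq I) : algA :=
  match w with
  | [::] => 0
  | l :: w' => (k == l)%:R *: basisA 0 w'
               + q ^ form (alpha k) (alpha l) *: mulAlg (Fgen l) (dLword k w')
  end.

Definition dL (k : I) (g : algA) : algA :=
  \sum_(x <- msupp g) g@_x *: dLword k x.2.

Definition starpow (star : algA -> algA -> algA) (x : algA) (n : nat) : algA :=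
  iter n (star x) oneA.

End QuantumSymmetricPair.

Definition sym_GCM (I : finType) (a : I -> I -> int) (d : I -> nat) : Prop :=
  [/\ forall k, a k k = 2,
      forall k l, k != l -> a k l <= 0,
      forall k l, (a k l = 0 <-> a l k = 0),
      (forall k, (0 < d k)%N) /\
        (forall k l, (d k)%:Z * a k l = (d l)%:Z * a l k)
    & \big[gcdn/0%N]_(k : I) d k = 1%N].

Definition is_star_product (I : finType) (K : fieldType) (a : I -> I -> int)
    (d : I -> nat) (q : K) (tau : I -> I) (c : I -> K)
    (star : algA I K -> algA I K -> algA I K) : Prop :=
  [/\
      forall (s : K) x y z, star (s *: x + y) z = s *: star x z + star y z,
      forall (s : K) x y z, star x (s *: y + z) = s *: star x y + star x z,
      associative star,
      forall h g, inH tau h -> inT g ->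
        star h g = mulAlg a d q h g /\ star g h = mulAlg a d q g h
    &
      forall k g, inT g ->
        star (Fgen K k) g =
          mulAlg a d q (Fgen K k) g
          - (c k * q ^ form a d (alpha k) (alpha (tau k))
               / (q ^+ d k - (q ^+ d k)^-1))
            *: mulAlg a d q (Kel K (alpha (tau k) - alpha k)) (dL a d q (tau k) g)].

(* Let X r s := F_i^{⊛r} ⊛ F_j ⊛ F_i^{⊛s} and W r s := F_i^r F_j F_i^s in
   T(V^-). As tau i = i, F_i ⊛ g = F_i g - C ∂^L_i(g) for g in T(V^-), and
   ∂^L_i deletes one letter F_i of a word (never F_j, since i <> j); as
   tau j <> i, ∂^L_(tau j) kills F_i^{⊛s}, so F_j ⊛ F_i^{⊛s} = F_j F_i^{⊛s}.
   Hence X r s is W r s plus a combination of words W x y with x + y < r + s.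
   Inverting this unitriangular relation writes W m n in terms of the X r s,
   and comparing coefficients of W r s with r + s maximal shows that the
   X r s are linearly independent. *)

From Pilot Require Import Defs.
From HB Require Import structures.
From mathcomp Require Import all_boot all_order all_algebra.
From mathcomp Require Import finmap.
From mathcomp Require Import monalg zify.

Set Implicit Arguments.
Unset Strict Implicit.
Unset Printing Implicit Defensive.
Import Order.TTheory GRing.Theory Num.Theory.
Local Open Scope ring_scope.

Section Supports.
Variables (T : choiceType) (R : nzRingType).
Implicit Types (P Q : T -> Prop) (g h : {malg R[T]}).

Definition supp P g := forall k, k \in msupp g -> P k.

Lemma supp0 P : supp P 0.
Proof. by move=> k; rewrite msupp0 inE. Qed.

Lemma suppD P g h : supp P g -> supp P h -> supp P (g + h).
Proof.
by move=> Pg Ph k /(fsubsetP (msuppD_le g h)); rewrite inE => /orP[/Pg|/Ph].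
Qed.

Lemma suppN P g : supp P g -> supp P (- g).
Proof. by move=> Pg k; rewrite msuppN => /Pg. Qed.

Lemma suppB P g h : supp P g -> supp P h -> supp P (g - h).
Proof. by move=> Pg /suppN; apply: suppD. Qed.

Lemma suppZ P c g : supp P g -> supp P (c *: g).
Proof. by move=> Pg k /(fsubsetP (msuppZ_le c g)) /Pg. Qed.

Lemma supp_sum P (J : eqType) (s : seq J) (F : J -> {malg R[T]}) :
  (forall x, x \in s -> supp P (F x)) -> supp P (\sum_(x <- s) F x).
Proof.
elim: s => [|x s IHs] PF; first by rewrite big_nil; apply: supp0.
rewrite big_cons; apply: suppD; first by apply: PF; rewrite mem_head.
by apply: IHs => y ys; apply: PF; rewrite inE ys orbT.
Qed.

Lemma suppU P c k0 : P k0 -> supp P << c *g k0 >>.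
Proof. by move=> Pk0 k /(fsubsetP msuppU_le); rewrite inE => /eqP ->. Qed.

Lemma supp_mono P Q g : supp P g -> (forall k, P k -> Q k) -> supp Q g.
Proof. by move=> Pg PQ k /Pg /PQ. Qed.

Lemma mcoeff_supp_out P g k : supp P g -> ~ P k -> g@_k = 0.
Proof. by move=> Pg nPk; apply: mcoeff_outdom; apply/negP => /Pg. Qed.

Lemma supp_subU P g k0 :
  supp P (g - << k0 >>) -> supp (fun k => k = k0 \/ P k) g.
Proof.
move=> Pg; rewrite -(subrK << k0 >> g); apply: suppD; last by apply: suppU; left.
by apply: (supp_mono Pg) => k; right.
Qed.

Lemma monalgZU c k : c *: << k >> = << c *g k >> :> {malg R[T]}.
Proof.
by apply/malgP => k'; rewrite mcoeffZ !mcoeffU; case: eqP; rewrite ?mulr1 ?mulr0.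
Qed.

Lemma sum_msupp_pred1 g (F : T -> R) k0 :
  \sum_(k <- msupp g | k == k0) g@_k * F k = g@_k0 * F k0.
Proof.
case: msuppP => [k0g | k0g]; first exact: fbig_pred1_inj.
by rewrite mul0r big1_seq // => k /andP[/eqP -> k0g']; rewrite k0g' in k0g.
Qed.

End Supports.

Lemma sum_ord_delta (V : nmodType) (M r : nat) (F : nat -> V) :
  (r < M)%N -> \sum_(r' < M) F r' *+ (r' == r :> nat) = F r.
Proof.
move=> ltrM; under eq_bigr do rewrite mulrb.
by rewrite -big_mkcond big_ord1_eq ltrM.
Qed.

Lemma size_coef_leq_bigmax (R : nzSemiRingType) (p : {poly {poly R}}) r :
  (size (p`_r)%R <= \max_(r' < size p) size (p`_r')%R)%N.
Proof.
case: (ltnP r (size p)) => [ltrp | lepr]; last by rewrite nth_default ?size_poly0.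
exact: (@leq_bigmax _ (fun r' : 'I_(size p) => size (p`_r')%R) (Ordinal ltrp)).
Qed.

Section PolyCombination.
Variables (R : nzRingType) (V : lmodType R) (X : nat -> nat -> V).

Definition comb (M : nat) (cf : nat -> nat -> R) :=
  \sum_(r < M) \sum_(s < M) cf r s *: X r s.

Definition comb_poly (p : {poly {poly R}}) :=
  \sum_(r < size p) \sum_(s < size p`_r) p`_r`_s *: X r s.

Lemma combD M cf1 cf2 :
  comb M (fun r s => cf1 r s + cf2 r s) = comb M cf1 + comb M cf2.
Proof.
rewrite -big_split; apply: eq_bigr => r _; rewrite -big_split.
by apply: eq_bigr => s _; rewrite scalerDl.
Qed.

Lemma combB M cf1 cf2 :
  comb M (fun r s => cf1 r s - cf2 r s) = comb M cf1 - comb M cf2.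
Proof.
rewrite -sumrB; apply: eq_bigr => r _; rewrite -sumrB.
by apply: eq_bigr => s _; rewrite scalerBl.
Qed.

Lemma combZ M c cf : comb M (fun r s => c * cf r s) = c *: comb M cf.
Proof.
rewrite scaler_sumr; apply: eq_bigr => r _; rewrite scaler_sumr.
by apply: eq_bigr => s _; rewrite scalerA.
Qed.

Lemma comb_poly_widen (p : {poly {poly R}}) M :
    (size p <= M)%N -> (forall r, size (p`_r)%R <= M)%N ->
  comb_poly p = comb M (fun r s => p`_r`_s).
Proof.
move=> lepM leprM; rewrite /comb_poly /comb.
rewrite (big_ord_widen _ (fun r => \sum_(s < size p`_r) p`_r`_s *: X r s) lepM).
rewrite big_mkcond; apply: eq_bigr => r _; case: ltnP => [_ | lepr].
  rewrite (big_ord_widen _ (fun s => p`_r`_s *: X r s) (leprM r)) big_mkcond.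
  by apply: eq_bigr => s _; case: ltnP => // leprs; rewrite nth_default ?scale0r.
by rewrite (nth_default _ lepr) big1 // => s _; rewrite coef0 scale0r.
Qed.

Definition spanned M v := exists cf, v = comb M cf.

Lemma spanned0 M : spanned M 0.
Proof.
exists (fun _ _ => 0); rewrite /comb big1 // => r _.
by rewrite big1 // => s _; rewrite scale0r.
Qed.

Lemma spannedD M v w : spanned M v -> spanned M w -> spanned M (v + w).
Proof.
by move=> [cf1 ->] [cf2 ->]; exists (fun r s => cf1 r s + cf2 r s); rewrite combD.
Qed.

Lemma spannedB M v w : spanned M v -> spanned M w -> spanned M (v - w).
Proof.
by move=> [cf1 ->] [cf2 ->]; exists (fun r s => cf1 r s - cf2 r s); rewrite combB.
Qed.

Lemma spannedZ M c v : spanned M v -> spanned M (c *: v).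
Proof. by move=> [cf ->]; exists (fun r s => c * cf r s); rewrite combZ. Qed.

Lemma spanned_sum M (J : eqType) (s : seq J) (F : J -> V) :
  (forall x, x \in s -> spanned M (F x)) -> spanned M (\sum_(x <- s) F x).
Proof.
elim: s => [|x s IHs] spF; first by rewrite big_nil; apply: spanned0.
rewrite big_cons; apply: spannedD; first by apply: spF; rewrite mem_head.
by apply: IHs => y ys; apply: spF; rewrite inE ys orbT.
Qed.

Lemma spannedX M r s : (r < M)%N -> (s < M)%N -> spanned M (X r s).
Proof.
move=> ltrM ltsM; exists (fun r' s' => 1 *+ (s' == s) *+ (r' == r)).
rewrite -(sum_ord_delta (fun r' => X r' s) ltrM); apply: eq_bigr => r' _.
rewrite -(sum_ord_delta (fun s' => X r' s') ltsM) -sumrMnl; apply: eq_bigr => s' _.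
by rewrite -!scalerMnl scale1r.
Qed.

End PolyCombination.

Section Unitriangular.
Variables (T : choiceType) (R : nzRingType) (X : nat -> nat -> {malg R[T]}).
Variable kappa : nat -> nat -> T.

Definition below n k := exists x y, (x + y < n)%N /\ k = kappa x y.

Hypothesis kappa_inj : forall x y x' y', kappa x y = kappa x' y' -> (x, y) = (x', y').
Hypothesis X_unitriangular : forall r s, supp (below (r + s)) (X r s - << kappa r s >>).

Lemma mcoeff_X_lower r s r' s' : (r' + s' <= r + s)%N ->
  (X r' s')@_(kappa r s) = ((r' == r) && (s' == s))%:R.
Proof.
move=> le_rs; rewrite -(subrK << kappa r' s' >> (X r' s')) mcoeffD mcoeffU.
rewrite (mcoeff_supp_out (@X_unitriangular r' s')) ?add0r; last first.
  by move=> [x [y [lt_xy /kappa_inj [ex ey]]]]; lia.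
suff -> : (kappa r' s' == kappa r s) = ((r', s') == (r, s)) by [].
by apply/eqP/eqP => [/kappa_inj | [-> ->]].
Qed.

Lemma comb_free M cf : comb X M cf = 0 ->
  forall r s, (r < M)%N -> (s < M)%N -> cf r s = 0.
Proof.
(* Downward induction on r + s. *)
move=> comb0 r s; have [t] := ubnP (M + M - (r + s)).
elim: t => // t IHt in r s *; rewrite ltnS => le_t ltrM ltsM.
have term_delta r' s' : (r' < M)%N -> (s' < M)%N ->
    cf r' s' * (X r' s')@_(kappa r s) = cf r' s' *+ (s' == s) *+ (r' == r).
  move=> ltr'M lts'M; case: (leqP (r' + s') (r + s)) => [le_rs | lt_rs].
    by rewrite mcoeff_X_lower //; do 2 case: eqP => _; rewrite ?mulr1 ?mulr0.
  by rewrite (IHt r' s') ?mul0r ?mul0rn //; lia.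
have := congr1 (mcoeff (kappa r s)) comb0; rewrite mcoeff0 raddf_sum /= => <-.
rewrite -(sum_ord_delta (fun r' => cf r' s) ltrM); apply: eq_bigr => r' _.
rewrite raddf_sum /= -(sum_ord_delta (cf r') ltsM) -sumrMnl; apply: eq_bigr => s' _.
by rewrite mcoeffZ term_delta.
Qed.

Lemma spanned_kappa M r s : (r + s < M)%N -> spanned X M << kappa r s >>.
Proof.
have [n] := ubnP (r + s); elim: n => // n IHn in r s *; rewrite ltnS => le_n ltM.
rewrite -(subKr (X r s) << kappa r s >>); apply: spannedB.
  by apply: spannedX; lia.
rewrite (monalgE (X r s - _)); apply: spanned_sum => k.
move=> /(@X_unitriangular r s) [x [y [lt_xy ->]]].
by rewrite -[u in spanned _ _ u]monalgZU; apply: spannedZ; apply: IHn; lia.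
Qed.

Lemma comb_poly_inj : injective (comb_poly X).
Proof.
move=> p p' eq_pp'.
pose M := (size p + size p' + \max_(r < size p) size (p`_r)%R
           + \max_(r < size p') size (p'`_r)%R)%N.
have le_coef_p r : (size (p`_r)%R <= M)%N.
  by have := size_coef_leq_bigmax p r; lia.
have le_coef_p' r : (size (p'`_r)%R <= M)%N.
  by have := size_coef_leq_bigmax p' r; lia.
have le_pM : (size p <= M)%N by lia.
have le_p'M : (size p' <= M)%N by lia.
have /comb_free coef_eq : comb X M (fun r s => p`_r`_s - p'`_r`_s) = 0.
  by rewrite combB -!comb_poly_widen // eq_pp' subrr.
apply/polyP => r; apply/polyP => s.
have [ltrM | leMr] := ltnP r M; last first.
  by rewrite !(nth_default _ (leq_trans _ leMr)).
have [ltsM | leMs] := ltnP s M; last first.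
  by rewrite !(nth_default _ (leq_trans _ leMs)).
by apply/eqP; rewrite -subr_eq0; apply/eqP; apply: coef_eq.
Qed.

Theorem unitriangular_comb_poly_unique m n :
  exists! p : {poly {poly R}}, << kappa m n >> = comb_poly X p.
Proof.
pose M := (m + n).+1; have [cf ->] := @spanned_kappa M m n (ltnSn _).
pose p := \poly_(r < M) \poly_(s < M) cf r s.
have comb_p : comb X M cf = comb_poly X p.
  rewrite (@comb_poly_widen _ _ _ _ M) ?size_poly // => [|r].
    rewrite /comb; apply: eq_bigr => r _; apply: eq_bigr => s _.
    by rewrite !(coef_poly, ltn_ord).
  by rewrite coef_poly; case: ifP => _; rewrite ?size_poly ?size_poly0.
by exists p; split=> // p' eq_p'; apply: comb_poly_inj; rewrite -comb_p.
Qed.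

End Unitriangular.

Section SkewAlgebra.
Variables (I : finType) (K : fieldType) (a : I -> I -> int) (d : I -> nat) (q : K).

Local Notation key := (rootQ I * seq I)%type.
Local Notation mul := (mulAlg a d q).
Local Notation B := (basisA K).
Local Notation form := (Defs.form a d).

Lemma form0l nu : form 0 nu = 0.
Proof.
by rewrite /Defs.form big1 // => k _; rewrite big1 // => l _; rewrite ffunE !mul0r.
Qed.

Lemma form0r mu : form mu 0 = 0.
Proof.
by rewrite /Defs.form big1 // => k _; rewrite big1 // => l _; rewrite ffunE mulr0 mul0r.
Qed.

Lemma mulAlg_basisl mu u y : mul (B mu u) y =
  \sum_(v <- msupp y) (y@_v * q ^ form v.1 (wt u)) *: B (mu + v.1) (u ++ v.2).
Proof.
rewrite /mulAlg /basisA msuppU oner_eq0 big_seq_fset1 mcoeffUU.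
by apply: eq_bigr => v _; rewrite mul1r.
Qed.

Lemma mcoeff_mulAlg_basisl mu u y nu w : (mul (B mu u) y)@_(nu, w) =
  if take (size u) w == u
  then y@_(nu - mu, drop (size u) w) * q ^ form (nu - mu) (wt u) else 0.
Proof.
rewrite mulAlg_basisl raddf_sum /=.
under eq_bigr => v _ do rewrite mcoeffZ mcoeffU mulrnAr mulr1.
have key_eq v : ((mu + v.1, u ++ v.2) == (nu, w)) =
    (take (size u) w == u) && (v == (nu - mu, drop (size u) w)).
  case: v => [nu' w'] /=; rewrite !xpair_eqE andbCA; congr (_ && _).
    by rewrite [RHS]eq_sym subr_eq [RHS]eq_sym addrC.
  apply/eqP/andP => [<- | [/eqP take_w /eqP ->]].
    by rewrite take_size_cat ?drop_size_cat.
  by rewrite -{1}take_w cat_take_drop.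
case: ifP => pre; last by rewrite big1 // => v _; rewrite key_eq pre.
under eq_bigr => v _ do rewrite key_eq pre /= mulrb.
by rewrite -big_mkcond sum_msupp_pred1.
Qed.

Lemma mulAlg1l y : mul (oneA I K) y = y.
Proof.
apply/malgP => -[nu w]; rewrite mcoeff_mulAlg_basisl take0 eqxx drop0 subr0.
by rewrite /wt big_nil form0r expr0z mulr1.
Qed.

Lemma mulAlg0r x : mul x 0 = 0.
Proof. by rewrite /mulAlg msupp0 big1 // => u _; rewrite big_seq_fset0. Qed.

Lemma mulAlg_basis u v : mul (B 0 u) (B 0 v) = B 0 (u ++ v).
Proof.
rewrite mulAlg_basisl {1}/basisA msuppU oner_eq0 big_seq_fset1 mcoeffUU /=.
by rewrite form0l expr0z mulr1 scale1r addr0.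
Qed.

Lemma powAlg_Fgen k m : powAlg a d q (Fgen K k) m = B 0 (nseq m k).
Proof.
elim: m => [|m IHm] //.
by rewrite /powAlg iterS -/(powAlg a d q (Fgen K k) m) IHm mulAlg_basis.
Qed.

Lemma mulAlg_basislB mu u y z :
  mul (B mu u) (y - z) = mul (B mu u) y - mul (B mu u) z.
Proof.
apply/malgP => -[nu w]; rewrite mcoeffB !mcoeff_mulAlg_basisl mcoeffB.
by case: ifP => _; rewrite ?mulrBl ?subr0.
Qed.

Lemma supp_mulAlg_basisl (P Q : key -> Prop) mu u y : supp P y ->
  (forall nu w, P (nu, w) -> Q (mu + nu, u ++ w)) -> supp Q (mul (B mu u) y).
Proof.
move=> Py PQ [nu w]; rewrite -mcoeff_neq0 mcoeff_mulAlg_basisl.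
case: ifP => [/eqP take_w | _]; last by rewrite eqxx.
rewrite mulf_eq0 negb_or mcoeff_neq0 => /andP[/Py /PQ + _].
by rewrite subrKC -{1}take_w cat_take_drop.
Qed.

Lemma supp_dL (P : key -> Prop) k g :
  (forall x, x \in msupp g -> supp P (dLword a d q k x.2)) -> supp P (dL a d q k g).
Proof. by move=> dLP; apply: supp_sum => x /dLP; apply: suppZ. Qed.

Lemma dL_eq0 k g :
  (forall x, x \in msupp g -> dLword a d q k x.2 = 0) -> dL a d q k g = 0.
Proof. by move=> dL0; rewrite /dL big1_seq // => x /andP[_ /dL0 ->]; rewrite scaler0. Qed.

End SkewAlgebra.

Section TwoGenerators.
Variables (I : finType) (K : fieldType) (a : I -> I -> int) (d : I -> nat) (q : K).
Variables (i j : I).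
Hypothesis neq_ij : i != j.

Local Notation key := (rootQ I * seq I)%type.
Local Notation mul := (mulAlg a d q).
Local Notation B := (basisA K).
Local Notation dLw := (dLword a d q).

Definition word_ij x y := nseq x i ++ j :: nseq y i.

Definition key_ij x y : key := (0, word_ij x y).

Definition powers_below n (k : key) := exists c, (c < n)%N /\ k = (0, nseq c i).

Lemma key_ij_inj x y x' y' : key_ij x y = key_ij x' y' -> (x, y) = (x', y').
Proof.
case=> eq_w; have index_j z t : index j (word_ij z t) = z.
  by rewrite index_cat mem_nseq eq_sym (negbTE neq_ij) andbF size_nseq /= eqxx addn0.
have ex : x = x' by rewrite -(index_j x y) eq_w index_j.
move/(congr1 size): eq_w; rewrite !size_cat /= !size_nseq => ey.
by congr (_, _); lia.
Qed.

Lemma dLword_nseq_eq0 k n : k != i -> dLw k (nseq n i) = 0.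
Proof.
move=> neq_ki; elim: n => [|n IHn] //=.
by rewrite (negbTE neq_ki) scale0r add0r IHn mulAlg0r scaler0.
Qed.

Lemma supp_dLword_nseq n : supp (powers_below n) (dLw i (nseq n i)).
Proof.
elim: n => [|n IHn] /=; first exact: supp0.
apply: suppD; apply: suppZ; first by apply: suppU; exists n.
apply: supp_mulAlg_basisl IHn _ => nu w [c0 [lt_c0 [-> ->]]].
by exists c0.+1; rewrite add0r.
Qed.

Lemma supp_dLword_ij x y : supp (below key_ij (x + y)) (dLw i (word_ij x y)).
Proof.
elim: x => [|x IHx] /=.
  rewrite (negbTE neq_ij) scale0r add0r; apply: suppZ.
  apply: supp_mulAlg_basisl (@supp_dLword_nseq y) _ => nu w [c0 [lt_c0 [-> ->]]].
  by exists 0%N, c0; rewrite add0r.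
apply: suppD; apply: suppZ; first by apply: suppU; exists x, y.
apply: supp_mulAlg_basisl IHx _ => nu w [x' [y' [lt_xy [-> ->]]]].
by exists x'.+1, y'; rewrite add0r; split=> //; lia.
Qed.

Variables (tau : I -> I) (c : I -> K) (star : algA I K -> algA I K -> algA I K).
Hypothesis star_prod : is_star_product a d q tau c star.
Hypothesis tau_i : tau i = i.
Hypothesis tau_j : tau j != i.

Lemma inH_oneA : inH tau (oneA I K).
Proof.
move=> x; rewrite /oneA /basisA msuppU oner_eq0 in_fset1 => /eqP -> /=.
by split=> //; exists (fun=> 0); rewrite big1 // => k _; rewrite mulr0z.
Qed.

Lemma star1l g : inT g -> star (oneA I K) g = g.
Proof.
case: star_prod => _ _ _ starH _ Tg.
by case: (starH _ _ inH_oneA Tg) => -> _; rewrite mulAlg1l.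
Qed.

Lemma starpow_starl x r g : inT g -> star (starpow star x r) g = iter r (star x) g.
Proof.
case: star_prod => _ _ starA _ _ Tg.
elim: r => [|r IHr]; first exact: star1l.
by rewrite /starpow iterS -starA -/(starpow star x r) IHr.
Qed.

Lemma star_Fi_lead (L : key -> Prop) g w : inT g ->
    supp L (mul (Fgen K i) (g - B 0 w)) -> supp L (dL a d q i g) ->
  supp L (star (Fgen K i) g - B 0 (i :: w)).
Proof.
case: star_prod => _ _ _ _ starF Tg Lmul LdL.
rewrite starF // tau_i subrr mulAlg1l -(@mulAlg_basis _ _ a d q [:: i] w).
by rewrite addrAC -mulAlg_basislB; apply: suppB => //; apply: suppZ.
Qed.

Lemma star_Fj g :
  inT g -> dL a d q (tau j) g = 0 -> star (Fgen K j) g = mul (Fgen K j) g.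
Proof.
case: star_prod => _ _ _ _ starF Tg dL0.
by rewrite starF // dL0 mulAlg0r scaler0 subr0.
Qed.

Lemma starpow_Fi_lead s :
  supp (powers_below s) (starpow star (Fgen K i) s - B 0 (nseq s i)).
Proof.
elim: s => [|s IHs]; first by rewrite subrr; apply: supp0.
have Pg := supp_subU IHs.
apply: star_Fi_lead.
- by move=> k /Pg [-> | [c0 [_ ->]]].
- apply: supp_mulAlg_basisl IHs _ => nu w [c0 [lt_c0 [-> ->]]].
  by exists c0.+1; rewrite add0r.
have dL_nseq c0 : (c0 <= s)%N -> supp (powers_below s.+1) (dLw i (nseq c0 i)).
  move=> le_c0; apply: (supp_mono (@supp_dLword_nseq c0)) => k [c1 [lt_c1 ->]].
  by exists c1; split=> //; lia.
by apply: supp_dL => x /Pg [-> | [c0 [/ltnW le_c0 ->]]]; apply: dL_nseq.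
Qed.

Lemma star_Fj_starpow_lead s : supp (below key_ij s)
  (star (Fgen K j) (starpow star (Fgen K i) s) - B 0 (word_ij 0 s)).
Proof.
have Ps := @starpow_Fi_lead s; have Pg := supp_subU Ps.
rewrite star_Fj; first last.
- by apply: dL_eq0 => x /Pg [-> | [c0 [_ ->]]]; apply: dLword_nseq_eq0.
- by move=> k /Pg [-> | [c0 [_ ->]]].
rewrite -[B 0 (word_ij 0 s)](@mulAlg_basis _ _ a d q [:: j]) -mulAlg_basislB.
apply: supp_mulAlg_basisl Ps _ => nu w [c0 [lt_c0 [-> ->]]].
by exists 0%N, c0; rewrite add0r.
Qed.

Lemma iter_star_Fi_lead r s : supp (below key_ij (r + s))
  (iter r (star (Fgen K i)) (star (Fgen K j) (starpow star (Fgen K i) s))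
   - B 0 (word_ij r s)).
Proof.
elim: r => [|r IHr]; first exact: star_Fj_starpow_lead.
have Pg := supp_subU IHr.
apply: star_Fi_lead.
- by move=> k /Pg [-> | [x [y [_ ->]]]].
- apply: supp_mulAlg_basisl IHr _ => nu w [x [y [lt_xy [-> ->]]]].
  by exists x.+1, y; rewrite add0r; split=> //; lia.
have dL_word x y : (x + y <= r + s)%N ->
    supp (below key_ij (r.+1 + s)) (dLw i (word_ij x y)).
  move=> le_xy; apply: (supp_mono (@supp_dLword_ij x y)) => k [x' [y' [lt_xy' ->]]].
  by exists x', y'; split=> //; lia.
by apply: supp_dL => k /Pg [-> | [x [y [/ltnW le_xy ->]]]]; apply: dL_word.
Qed.

Definition starword_ij r s :=
  star (star (starpow star (Fgen K i) r) (Fgen K j)) (starpow star (Fgen K i) s).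

Lemma starword_ij_unitriangular r s :
  supp (below key_ij (r + s)) (starword_ij r s - << key_ij r s >>).
Proof.
case: star_prod => _ _ starA _ _.
rewrite /starword_ij -starA starpow_starl; first exact: iter_star_Fi_lead.
by move=> k /(supp_subU (@star_Fj_starpow_lead s)) [-> | [x [y [_ ->]]]].
Qed.

End TwoGenerators.

Theorem lemma4p7 (I : finType) (a : I -> I -> int) (d : I -> nat)
    (K : fieldType) (q : K) (tau : I -> I) (c : I -> K)
    (star : algA I K -> algA I K -> algA I K) (i j : I) (m n : nat) :
  sym_GCM a d ->
  [pchar K] =i pred0 ->
  q != 0 ->
  (forall k, q ^+ (2 * d k) != 1) ->
  (forall k, tau (tau k) = k) ->
  (forall k l, a (tau k) (tau l) = a k l) ->
  (forall k, c k != 0) ->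
  (forall k, a k (tau k) = 0 -> c k = c (tau k)) ->
  is_star_product a d q tau c star ->
  tau i = i -> i != j ->
  exists! p : {poly {poly K}},
    mulAlg a d q (mulAlg a d q (powAlg a d q (Fgen K i) m) (Fgen K j))
               (powAlg a d q (Fgen K i) n)
    = \sum_(r < size p) \sum_(s < size p`_r)
        (p`_r)`_s *: star (star (starpow star (Fgen K i) r) (Fgen K j))
                          (starpow star (Fgen K i) s).
Proof.
(* The conditions on a, K, q and c only serve to construct the product, which
   is given here. *)
move=> _ _ _ _ tauK _ _ _ star_prod tau_i neq_ij.
have tau_j : tau j != i.
  by apply: contra_neq neq_ij => tau_j_i; rewrite -(tauK j) tau_j_i tau_i.
rewrite !powAlg_Fgen !mulAlg_basis -catA.
exact: (unitriangular_comb_poly_unique (key_ij_inj neq_ij)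
          (starword_ij_unitriangular neq_ij star_prod tau_i tau_j)).
Qed.
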